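(* Let $(\mathcal G,L,I)$ be a relational symplectic groupoid with $L_2$ as defined. Then $$\overline{I_{rel}}\circ L_2=\overline{L_2}\circ\overline{I_{rel}}\qquad\text{and}\qquad L_2^*=L_2.$$ Here $L_2^*$ is the transpose relation, and $\overline{L_2}$ is the same subset as $L_2$ regarded as a relation $\bar{\mathcal G}\nrightarrow\bar{\mathcal G}$. In set terms: $(x,y)\in L_2\iff(I(x),I(y))\in L_2$, and $(x,y)\in L_2\iff(y,x)\in L_2$.
   Context: Relations: for sets $A,B$, a relation $R:A\nrightarrow B$ is a subset $R\subset A\times B$. The composition of $R:A\nrightarrow B$ and $R':B\nrightarrow C$ is $R'\circ R=\{(a,c): \exists b,\ (a,b)\in R,\ (b,c)\in R'\}$. The transpose is $R^*=\{(b,a):(a,b)\in R\}$. Products $R_1\times R_2:A_1\times A_2\nrightarrow B_1\times B_2$ are taken componentwise. $*$ denotes a one-point set, and a relation $*\nrightarrow B$ is identified with a subset of $B$. For a (possibly infinite-dimensional, weak) symplectic manifold $\mathcal M$, $\bar{\mathcal M}$ denotes $\mathcal M$ with the negated symplectic form. An immersed canonical relation $\mathcal M\nrightarrow\mathcal N$ is an immersed Lagrangian submanifold of $\bar{\mathcal M}\times\mathcal N$. A relational symplectic groupoid is a triple $(\mathcal G,L,I)$ consisting of: - a weak symplectic manifold $\mathcal G$ (the induced map $T\mathcal G\to T^*\mathcal G$ is injective); - an immersed Lagrangian submanifold $L\subset\mathcal G^3$; - an antisymplectomorphism $I:\mathcal G\to\mathcal G$. Notation: - $L_{rel}:\mathcal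 G\times\mathcal G\nrightarrow\bar{\mathcal G}$ is the subset $\{((x,y),z):(x,y,z)\in L\}$. - $I_{rel}:\bar{\mathcal G}\nrightarrow\mathcal G$ is the graph $\{(x,I(x))\}$. - $\overline{L_{rel}}:\bar{\mathcal G}\times\bar{\mathcal G}\nrightarrow\mathcal G$ and $\overline{I_{rel}}:\mathcal G\nrightarrow\bar{\mathcal G}$ are the same subsets regarded between the sign-reversed manifolds. - $T_{rel}$ and $\overline{T_{rel}}$ denote the graph of the transposition $(x,y)\mapsto(y,x)$ on $\mathcal G\times\mathcal G$, respectively on $\bar{\mathcal G}\times\bar{\mathcal G}$. - $Id$ denotes the graph of the identity. - $L_I:*\nrightarrow\mathcal G\times\mathcal G$ is the subset $\{(x,I(x)):x\in\mathcal G\}$. - $L_3:=I_{rel}\circ L_{rel}:\mathcal G\times\mathcal G\nrightarrow\mathcal G$, i.e. $L_3=\{((x,y),I(z)):(x,y,z)\in L\}$. Axioms: - (A.1) $L$ is cyclically symmetric: $(x,y,z)\in L\Rightarrow(y,z,x)\in L$. - (A.2) $I^2=\mathrm{id}$. - (A.3) $I_{rel}\circ L_{rel}=\overline{L_{rel}}\circ\overline{T_{rel}}\circ(\overline{I_{rel}}\times\overline{I_{rel}})$. - (A.4) $L_3\circ(L_3\times Id)=L_3\circ(Id\times L_3)$, and this is an immersed Lagrangian submanifold (as a relation $\mathcal G^3\nrightarrow\mathcal G$). - (A.5) $L_1:=L_3\circ L_I$ is an immersed Lagrangian submanifold of $\mathcal G$. - (A.6) $L_3\circ(L_1\times L_1)=L_1$.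 - (A.7) $L_2:=L_3\circ(L_1\times Id)$ is an immersed Lagrangian submanifold of $\bar{\mathcal G}\times\mathcal G$. *)

(* plain set-theoretic relations, with the differential-geometric
   (symplectic / Lagrangian) conditions kept as abstract predicates. *)
Set Implicit Arguments.

Definition rel (A B : Type) := A -> B -> Prop.

Definition rel_eq {A B} (R S : rel A B) : Prop := forall a b, R a b <-> S a b.

(** Composition: [comp R' R] is R' o R (first R, then R'). *)
Definition comp {A B C} (R' : rel B C) (R : rel A B) : rel A C :=
  fun a c => exists b, R a b /\ R' b c.

Definition transpose {A B} (R : rel A B) : rel B A := fun b a => R a b.

Definition prod_rel {A1 A2 B1 B2} (R1 : rel A1 B1) (R2 : rel A2 B2)
  : rel (A1 * A2) (B1 * B2) :=
  fun a b => R1 (fst a) (fst b) /\ R2 (snd a) (snd b).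

Definition graph {A B} (f : A -> B) : rel A B := fun a b => b = f a.
Definition Id {A} : rel A A := graph (fun x : A => x).

Definition swap {A} (p : A * A) : A * A := (snd p, fst p).
Definition assoc {A} (p : (A * A) * A) : A * (A * A) :=
  (fst (fst p), (snd (fst p), snd p)).

(** Signs of symplectic forms do not affect the
    underlying sets, so only the set-level data matters for the conclusion. *)
Record SymplecticData (G : Type) := {
  weak_symplectic : Prop;
  imm_lag_G3      : (G * G * G -> Prop) -> Prop;
  imm_lag_rel31   : rel ((G * G) * G) G -> Prop;
  imm_lag_G       : (G -> Prop) -> Prop;
  imm_lag_rel11   : rel G G -> Prop;
  antisymplecto   : (G -> G) -> Prop
}.

Section RSG.
Context {G : Type} (L : G * G * G -> Prop) (I : G -> G).

Definition L_rel : rel (G * G) G := fun p z => L (fst p, snd p, z).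
Definition I_rel : rel G G := graph I.
Definition L3 : rel (G * G) G := comp I_rel L_rel.
Definition L_I : rel unit (G * G) := fun _ p => snd p = I (fst p).
Definition L1 : rel unit G := comp L3 L_I.
(** L_2 := L_3 o (L_1 x Id), with * x G identified with G. *)
Definition L2 : rel G G :=
  comp (comp L3 (prod_rel L1 Id)) (graph (fun g : G => (tt, g))).

Definition is_relational_symplectic_groupoid (S : SymplecticData G) : Prop :=
  weak_symplectic S /\
  imm_lag_G3 S L /\
  antisymplecto S I /\
  (forall x y z, L (x, y, z) -> L (y, z, x)) /\
  (forall x, I (I x) = x) /\
  rel_eq (comp I_rel L_rel)
                   (comp L_rel (comp (graph swap) (prod_rel I_rel I_rel))) /\
  rel_eq (comp L3 (prod_rel L3 Id))
                   (comp (comp L3 (prod_rel Id L3)) (graph assoc)) /\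
            imm_lag_rel31 S (comp L3 (prod_rel L3 Id)) /\
  imm_lag_G S (L1 tt) /\
  rel_eq (comp L3 (prod_rel L1 L1))
                   (comp L1 (fun (_ : unit * unit) (_ : unit) => True)) /\
  imm_lag_rel11 S L2.
End RSG.

Set Implicit Arguments.

(* Read the relation L3 as a partial multiplication on G:
   [mul x y c] means "x * y = c", i.e. (x, y, I c) lies in L.  Axiom A.3
   says that I reverses products, and together with cyclic symmetry (A.1)
   and I^2 = id (A.2) this yields the two division rules
     x * y = c  ->  x^-1 * c = y        and        x * y = c  ->  c * y^-1 = x,
   while A.4 is the associativity of [mul].  Unfolding the compositions,
   L1 is the set of "units" w * w^-1 and L2 relates x to y iff y = e * x for
   a unit e.  Symmetry of L2 is then one left division (x = e^-1 * y, with
   e^-1 again a unit), and the compatibility with I is the groupoid argument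
   "y = e * x  implies  y^-1 = v * x^-1 for the unit v = y^-1 * x", carried
   out with two uses of associativity. *)

Section PartialMultiplication.
Variables (G : Type) (L : G * G * G -> Prop) (I : G -> G).
Hypothesis L_cyclic : forall x y z, L (x, y, z) -> L (y, z, x).
Hypothesis I_invol : forall x, I (I x) = x.
Hypothesis A3 : rel_eq (comp (I_rel I) (L_rel L))
                  (comp (L_rel L) (comp (graph swap) (prod_rel (I_rel I) (I_rel I)))).
Hypothesis A4 : rel_eq (comp (L3 L I) (prod_rel (L3 L I) Id))
                  (comp (comp (L3 L I) (prod_rel Id (L3 L I))) (graph assoc)).

Lemma L_anti : forall x y z, L (x, y, z) -> L (I y, I x, I z).
Proof.
  intros x y z Hxyz.
  destruct (proj1 (A3 (x, y) (I z))) as [b [[[p q] [[Hp Hq] Hb]] HL]].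
  - exists z; split; [exact Hxyz | reflexivity].
  - unfold I_rel, graph, swap in *; simpl in *; subst p q b; exact HL.
Qed.

Definition mul (x y c : G) : Prop := L (x, y, I c).

Lemma L3_mul : forall x y c, L3 L I (x, y) c <-> mul x y c.
Proof.
  intros x y c; unfold L3, comp, L_rel, I_rel, graph, mul; simpl; split.
  - intros [b [Hb ->]]; rewrite I_invol; exact Hb.
  - intros H; exists (I c); split; [exact H | now rewrite I_invol].
Qed.

Lemma mul_anti : forall x y c, mul x y c -> mul (I y) (I x) (I c).
Proof. intros x y c H; exact (L_anti H). Qed.

Lemma mul_ldiv : forall x y c, mul x y c -> mul (I x) c y.
Proof.
  intros x y c H; pose proof (L_anti H) as H'; rewrite I_invol in H'.
  exact (L_cyclic H').
Qed.

Lemma mul_rdiv : forall x y c, mul x y c -> mul c (I y) x.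
Proof.
  intros x y c H; pose proof (L_anti H) as H'; rewrite I_invol in H'.
  exact (L_cyclic (L_cyclic H')).
Qed.

Lemma mul_assoc : forall x y z c,
  (exists t, mul x y t /\ mul t z c) <-> (exists s, mul y z s /\ mul x s c).
Proof.
  intros x y z c; split.
  - intros [t [Hxy Htz]].
    destruct (proj1 (A4 ((x, y), z) c)) as [p [Hp [[q s] [[Hq Hs] Hc]]]].
    + exists (t, z); split; [split; simpl; [apply L3_mul; exact Hxy | reflexivity] |].
      apply L3_mul; exact Htz.
    + unfold graph, assoc in Hp; subst p; simpl in *; unfold Id, graph in Hq; subst q.
      exists s; split; apply L3_mul; assumption.
  - intros [s [Hyz Hxs]].
    destruct (proj2 (A4 ((x, y), z) c)) as [[t z'] [[Ht Hz] Hc]].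
    + exists (x, (y, z)); split; [reflexivity |].
      exists (x, s); split; [split; simpl; [reflexivity | apply L3_mul; exact Hyz] |].
      apply L3_mul; exact Hxs.
    + unfold Id, graph in Hz; simpl in *; subst z'.
      exists t; split; apply L3_mul; assumption.
Qed.

Definition unit_of (e : G) : Prop := exists w, mul w (I w) e.

Lemma unit_of_I : forall e, unit_of e -> unit_of (I e).
Proof.
  intros e [w Hw]; exists w.
  pose proof (mul_anti Hw) as H; rewrite I_invol in H; exact H.
Qed.

Lemma unit_left_identity : forall e w, mul w (I w) e <-> mul e w w.
Proof.
  intros e w; split; intros H.
  - pose proof (mul_rdiv H) as H'; rewrite I_invol in H'; exact H'.
  - exact (mul_rdiv H).
Qed.

Lemma L2_mul : forall x y, L2 L I x y <-> exists e, unit_of e /\ mul e x y.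
Proof.
  intros x y; unfold L2, L1, L_I, comp, prod_rel, Id, graph; split.
  - intros [b [-> [[e x'] [[[[w w'] [Hw' Hw]] Hx'] He]]]]; simpl in *; subst w' x'.
    exists e; split; [exists w |]; apply L3_mul; assumption.
  - intros [e [[w Hw] He]].
    exists (tt, x); split; [reflexivity |].
    exists (e, x); split; [split; simpl; [| reflexivity] |].
    + exists (w, I w); split; [reflexivity |]; apply L3_mul; exact Hw.
    + apply L3_mul; exact He.
Qed.

Lemma L2_sym : forall x y, L2 L I x y -> L2 L I y x.
Proof.
  intros x y H; apply L2_mul in H; destruct H as [e [He Hexy]].
  apply L2_mul; exists (I e); split; [exact (unit_of_I He) |].
  exact (mul_ldiv Hexy).
Qed.

(* Compatibility with I: y = e * x gives I y = v * I x, where v = (I y) * x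
   is a unit because v * s = s for s = (I x) * w, e = w * (I w). *)
Lemma L2_I : forall x y, L2 L I x y -> L2 L I (I x) (I y).
Proof.
  intros x y H; apply L2_mul in H; destruct H as [e [[w Hw] Hexy]].
  assert (Hyx : mul y (I x) e) by exact (mul_rdiv Hexy).
  assert (Hew : mul e w w) by exact (proj1 (unit_left_identity e w) Hw).
  destruct (proj1 (mul_assoc y (I x) w w) (ex_intro _ e (conj Hyx Hew)))
    as [s [Hxw Hys]].
  assert (Hxs : mul x s w).
  { pose proof (mul_ldiv Hxw) as H'; rewrite I_invol in H'; exact H'. }
  destruct (proj2 (mul_assoc (I y) x s s) (ex_intro _ w (conj Hxs (mul_ldiv Hys))))
    as [v [Hyxv Hvs]].
  apply L2_mul; exists v; split.
  - exists s; exact (proj2 (unit_left_identity v s) Hvs).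
  - exact (mul_rdiv Hyxv).
Qed.

End PartialMultiplication.

Theorem mainTheorem5 (G : Type) (S : SymplecticData G)
  (L : G * G * G -> Prop) (I : G -> G) :
  is_relational_symplectic_groupoid L I S ->
  rel_eq (comp (I_rel I) (L2 L I)) (comp (L2 L I) (I_rel I)) /\
  rel_eq (transpose (L2 L I)) (L2 L I).
Proof.
  intros [_ [_ [_ [L_cyclic [I_invol [A3 [A4 _]]]]]]].
  pose proof (L2_I L_cyclic I_invol A3 A4) as L2_I_G.
  split.
  - intros a c; unfold comp, I_rel, graph; split.
    + intros [b [Hab ->]]; exists (I a); split; [reflexivity | exact (L2_I_G _ _ Hab)].
    + intros [b [-> Hc]]; exists (I c); split; [| now rewrite I_invol].
      pose proof (L2_I_G _ _ Hc) as H; rewrite I_invol in H; exact H.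
  - intros a b; split; apply (L2_sym L_cyclic I_invol A3).
Qed.
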